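(* Let $D>0$, $\beta=1$, $-1<\nu<1$, $\alpha>0$, and let the inelastic curvature be isotropic: $\bar{\mathbf k}=(\bar k,\bar k,0)^\top$ with $\bar k>0$. Consider the minimization of $\mathcal E(\mathbf k)=\tfrac12\mathbf D(\mathbf k-\bar{\mathbf k})\cdot(\mathbf k-\bar{\mathbf k})$ over $\{\mathbf k\in\mathbb R^3:\det\mathbf k=0\}$. Then the set of local minimizers coincides with the set of global minimizers, and it is: (i) if $\alpha>1$: exactly the two points $\mathbf k=((1+\nu)\bar k,0,0)^\top$ and $\mathbf k=(0,(1+\nu)\bar k,0)^\top$, i.e. the cylindrical configurations $(1+\nu)\bar k\,\mathbf e(\varphi)\otimes\mathbf e(\varphi)$ with $\varphi\in\{0,\pi/2\}$; (ii) if $\alpha<1$: exactly the two points $\mathbf k=(c,c,2c)^\top$ and $\mathbf k=(c,c,-2c)^\top$ with $c=\dfrac{(1+\nu)\bar k}{1+\nu+\alpha-\alpha\nu}$, i.e. the cylindrical configurations $2c\,\mathbf e(\varphi)\otimes\mathbf e(\varphi)$ with $\varphi=\pm\pi/4$; (iii) if $\alpha=1$: the whole one-parameter family $\{(1+\nu)\bar k\,(\cos^2\varphi,\sin^2\varphi,2\sin\varphi\cos\varphi)^\top:\ \varphi\in[0,\pi)\}$, i.e. all cylindrical configurations $(1+\nu)\bar k\,\mathbf e(\varphi)\otimes\mathbf e(\varphi)$, which all have the same energy (neutral stability). Moreover, in the coordinates $\boldsymbol\kappa=\kappa_m(1,a\cos\theta,b\sin\theta)$ with $\kappa_m$ eliminated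 through its optimal value, the reduced energy $\tilde U(\theta)=\min_{\kappa_m}\tfrac12\|\boldsymbol\kappa-T\bar{\mathbf k}\|^2$ satisfies $\tilde U'(\theta)=\dfrac{\bar\kappa_m^2(b^2-a^2)\sin2\theta}{2(a^2\cos^2\theta+b^2\sin^2\theta+1)^2}$ with $\bar\kappa_m=\sqrt{1+\nu}\,\bar k$.
   Context: Curvature tensors are Voigt vectors $\mathbf k=(k_{11},k_{22},2k_{12})^\top$, $\det\mathbf k=k_{11}k_{22}-k_{12}^2$, $\mathbf e(\varphi)=(\cos\varphi,\sin\varphi)$. The bending stiffness matrix is $\mathbf D=D\begin{pmatrix}1&\nu&0\\ \nu&\beta&0\\ 0&0&\alpha\frac{1-\nu}{2}\end{pmatrix}$. The map $T$: $\kappa_m=\sqrt{1+\nu/\sqrt\beta}\,\frac{k_{11}+\sqrt\beta\,k_{22}}{2}$, $\kappa_d=\sqrt{1-\nu/\sqrt\beta}\,\frac{\sqrt\beta\,k_{22}-k_{11}}{2}$, $\kappa_t=\sqrt{(1-\nu)\alpha}\,k_{12}$; $a=\sqrt{\frac{\sqrt\beta-\nu}{\sqrt\beta+\nu}}$, $b=\sqrt{\alpha\frac{1-\nu}{\sqrt\beta+\nu}}$ (for $\beta=1$: $a=\sqrt{(1-\nu)/(1+\nu)}$, $b=\sqrt\alpha\,a$). *)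

From Stdlib Require Import Reals Lra.
Open Scope R_scope.

(* Voigt vectors k = (k11, k22, 2 k12) represented as triples. *)
Definition vec3 : Type := (R * R * R)%type.
Definition v1 (k : vec3) : R := fst (fst k).
Definition v2 (k : vec3) : R := snd (fst k).
Definition v3 (k : vec3) : R := snd k.
Definition mk3 (x y z : R) : vec3 := (x, y, z).

Definition vsub (k l : vec3) : vec3 := mk3 (v1 k - v1 l) (v2 k - v2 l) (v3 k - v3 l).
Definition vdot (k l : vec3) : R := v1 k * v1 l + v2 k * v2 l + v3 k * v3 l.
Definition vnorm (k : vec3) : R := sqrt (vdot k k).

(* det k = k11 k22 - k12^2, with k12 = (third Voigt component)/2. *)
Definition detk (k : vec3) : R := v1 k * v2 k - (v3 k / 2) ^ 2.

Definition Dmul (D nu beta alpha : R) (k : vec3) : vec3 :=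
  mk3 (D * (v1 k + nu * v2 k))
      (D * (nu * v1 k + beta * v2 k))
      (D * (alpha * (1 - nu) / 2 * v3 k)).

Definition energy (D nu beta alpha : R) (kbar k : vec3) : R :=
  / 2 * vdot (Dmul D nu beta alpha (vsub k kbar)) (vsub k kbar).

Definition global_min (E : vec3 -> R) (k : vec3) : Prop :=
  detk k = 0 /\ forall k', detk k' = 0 -> E k <= E k'.

Definition local_min (E : vec3 -> R) (k : vec3) : Prop :=
  detk k = 0 /\ exists eps, 0 < eps /\
    forall k', detk k' = 0 -> vnorm (vsub k' k) < eps -> E k <= E k'.

Definition Tmap (nu beta alpha : R) (k : vec3) : vec3 :=
  mk3 (sqrt (1 + nu / sqrt beta) * ((v1 k + sqrt beta * v2 k) / 2))
      (sqrt (1 - nu / sqrt beta) * ((sqrt beta * v2 k - v1 k) / 2))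
      (sqrt ((1 - nu) * alpha) * (v3 k / 2)).

Definition acoef (nu beta : R) : R := sqrt ((sqrt beta - nu) / (sqrt beta + nu)).
Definition bcoef (nu beta alpha : R) : R := sqrt (alpha * (1 - nu) / (sqrt beta + nu)).

Definition kappa_of (nu beta alpha km theta : R) : vec3 :=
  mk3 km (km * (acoef nu beta * cos theta)) (km * (bcoef nu beta alpha * sin theta)).

Definition Ufun (nu beta alpha : R) (kbar : vec3) (km theta : R) : R :=
  / 2 * vdot (vsub (kappa_of nu beta alpha km theta) (Tmap nu beta alpha kbar))
             (vsub (kappa_of nu beta alpha km theta) (Tmap nu beta alpha kbar)).

Definition is_min_value (g : R -> R) (m : R) : Prop :=
  (exists x, g x = m) /\ forall x, m <= g x.

(* With s = k11 + k22 and p = k11 - k22, the constraint det k = 0 is the cone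
   s^2 = p^2 + (2 k12)^2 and 4E/D = (1+nu)(s - 2kb)^2 + (1-nu)(p^2 + alpha (2 k12)^2).
   At a local minimizer, rescaling along the ray through k gives a stationarity
   equation in s, and moving on the circle of fixed s, trading p^2 against
   (2 k12)^2, shows that only the cheaper of the two can be nonzero: alpha > 1
   forces k12 = 0, alpha < 1 forces p = 0, alpha = 1 leaves the whole circle.
   With s fixed by stationarity, these points attain the lower bound obtained from
   p^2 + alpha (2 k12)^2 >= min(1, alpha) s^2 and completing the square in s, so
   they are global minimizers. The reduced energy is an explicit minimum of a
   quadratic in kappa_m, differentiated in closed form. *)

From Stdlib Require Import Reals Lra Psatz.
From Coquelicot Require Import Coquelicot.
Open Scope R_scope.

Lemma quadratic_local_min_slope a b eps : 0 < eps ->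
  (forall h, Rabs h < eps -> 0 <= a * h + b * h ^ 2) -> a = 0.
Proof.
  intros Heps Hmin. destruct (Req_dec a 0) as [|Ha]; [assumption | exfalso].
  pose proof (Rabs_pos_lt a Ha) as Ha0. pose proof (Rabs_pos b) as Hb0.
  set (t := Rmin (eps / 2) (Rabs a / (Rabs b + 1))).
  assert (Ht0 : 0 < t) by (apply Rmin_glb_lt; [lra | apply Rdiv_lt_0_compat; lra]).
  assert (Hteps : t <= eps / 2) by apply Rmin_l.
  assert (Hta : t * (Rabs b + 1) <= Rabs a) by (apply Rle_div_r; [lra | apply Rmin_r]).
  assert (Hbt : b * t ^ 2 < Rabs a * t).
  { pose proof (Rle_abs b). nra. }
  destruct (Rcase_abs a) as [Hneg | Hpos].
  - rewrite Rabs_left in Hbt by lra.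
    specialize (Hmin t ltac:(rewrite Rabs_right; lra)). lra.
  - rewrite Rabs_right in Hbt by lra.
    specialize (Hmin (- t) ltac:(rewrite Rabs_Ropp, Rabs_right; lra)). nra.
Qed.

Lemma sqrt_shift_close P e : 0 <= e -> exists P', P' ^ 2 = P ^ 2 + e /\ (P' - P) ^ 2 <= e.
Proof.
  intros He. set (s := sqrt (P ^ 2 + e)).
  assert (Hs0 : 0 <= s) by apply sqrt_pos.
  assert (Hs2 : s * s = P ^ 2 + e) by (apply sqrt_sqrt; nra).
  assert (HPs : Rabs P <= s).
  { apply Rsqr_incr_0_var; [| exact Hs0]. rewrite <- Rsqr_abs. unfold Rsqr. nra. }
  destruct (Rle_dec 0 P) as [HP | HP].
  - rewrite Rabs_right in HPs by lra. exists s. split; nra.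
  - rewrite Rabs_left in HPs by lra. exists (- s). split; nra.
Qed.

Lemma circle_weighted_local_min c1 c2 P Q eps : c1 < c2 -> 0 < eps ->
  (forall P' Q', P' ^ 2 + Q' ^ 2 = P ^ 2 + Q ^ 2 -> (P' - P) ^ 2 + (Q' - Q) ^ 2 < eps ^ 2 ->
     c1 * P ^ 2 + c2 * Q ^ 2 <= c1 * P' ^ 2 + c2 * Q' ^ 2) ->
  Q = 0.
Proof.
  intros Hc Heps Hmin. destruct (Req_dec Q 0) as [|HQ]; [assumption | exfalso].
  assert (HQ2 : 0 < Q ^ 2) by (apply pow2_gt_0; exact HQ).
  set (t := Rmin (1 / 2) (eps ^ 2 / (4 * (Q ^ 2 + 1)))).
  assert (Ht0 : 0 < t) by (apply Rmin_glb_lt; [lra | apply Rdiv_lt_0_compat; nra]).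
  assert (Ht1 : t <= 1 / 2) by apply Rmin_l.
  assert (Hteps : t * (4 * (Q ^ 2 + 1)) <= eps ^ 2) by (apply Rle_div_r; [lra | apply Rmin_r]).
  (* shrink Q by the factor 1 - t and transfer the lost mass e to P *)
  set (e := Q ^ 2 * (2 * t - t ^ 2)).
  assert (He : 0 < e) by (unfold e; nra).
  destruct (sqrt_shift_close P e) as [P' [HP' HdP]]; [lra|].
  specialize (Hmin P' ((1 - t) * Q)).
  assert (HQ' : ((1 - t) * Q) ^ 2 = Q ^ 2 - e) by (unfold e; ring).
  assert (HdQ : ((1 - t) * Q - Q) ^ 2 = t ^ 2 * Q ^ 2) by ring.
  rewrite HP', HQ' in Hmin.
  assert (Hd : e + t ^ 2 * Q ^ 2 < eps ^ 2) by (unfold e; nra).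
  specialize (Hmin ltac:(ring) ltac:(lra)). nra.
Qed.

Lemma unit_circle_angle u v : u ^ 2 + v ^ 2 = 1 ->
  exists th, 0 <= th < 2 * PI /\ cos th = u /\ sin th = v.
Proof.
  intros H.
  assert (Hu : -1 <= u <= 1) by (split; nra).
  assert (Hs : sqrt (1 - u²) = Rabs v).
  { replace (1 - u²) with (v²) by (unfold Rsqr; simpl in H; lra). apply sqrt_Rsqr_abs. }
  pose proof PI_RGT_0.
  destruct (Rle_dec 0 v) as [Hv | Hv].
  - exists (acos u). pose proof (acos_bound u).
    split; [lra|]. split; [apply cos_acos; exact Hu|].
    rewrite sin_acos, Hs by exact Hu. apply Rabs_right; lra.
  - assert (Hu' : -1 < u < 1) by (split; nra).
    pose proof (acos_bound_lt u Hu').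
    exists (2 * PI - acos u). split; [lra|]. split.
    + rewrite cos_minus, cos_2PI, sin_2PI, cos_acos by exact Hu. ring.
    + rewrite sin_minus, cos_2PI, sin_2PI, sin_acos, Hs, Rabs_left by (exact Hu || lra). ring.
Qed.

(* The cone 4xy = z^2 with x + y = r is parametrized by the doubled angle of
   (x - y, z) on the circle of radius r. *)
Lemma cone_slice_angle r x y z : 0 < r -> x + y = r -> 4 * x * y = z ^ 2 ->
  exists phi, 0 <= phi < PI /\
    (x, y, z) = mk3 (r * cos phi ^ 2) (r * sin phi ^ 2) (r * (2 * sin phi * cos phi)).
Proof.
  intros Hr Hsum Hcone.
  destruct (unit_circle_angle ((x - y) / r) (z / r)) as [th [Hth [Hc Hs]]].
  { replace (((x - y) / r) ^ 2 + (z / r) ^ 2) with (((x - y) ^ 2 + z ^ 2) / r ^ 2) by (field; lra).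
    replace ((x - y) ^ 2 + z ^ 2) with (r ^ 2) by (rewrite <- Hcone, <- Hsum; ring).
    field; lra. }
  exists (th / 2). split; [lra|].
  replace th with (2 * (th / 2)) in Hc, Hs by field.
  rewrite cos_2a_cos in Hc. rewrite sin_2a in Hs.
  pose proof (sin2_cos2 (th / 2)) as Hpyth. unfold Rsqr in *.
  set (c := cos (th / 2)) in *. set (s := sin (th / 2)) in *.
  assert (Hdiff : x - y = r * (2 * c * c - 1)) by (rewrite Hc; field; lra).
  assert (Hz : z = r * (2 * s * c)) by (rewrite Hs; field; lra).
  unfold mk3. f_equal; [f_equal|]; [nra | nra | exact Hz].
Qed.

Lemma minimizers_iff (E : vec3 -> R) (C : vec3 -> Prop) :
  (forall k, local_min E k -> C k) -> (forall k, C k -> global_min E k) ->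
  (forall k, global_min E k <-> C k) /\ (forall k, local_min E k <-> global_min E k).
Proof.
  intros Hloc Hglob.
  assert (Hgl : forall k, global_min E k -> local_min E k).
  { intros k [Hdet Hmin]. split; [exact Hdet|]. exists 1. split; [lra | auto]. }
  split; intro k; split; auto.
Qed.

Lemma is_min_value_unique (g : R -> R) m1 m2 :
  is_min_value g m1 -> is_min_value g m2 -> m1 = m2.
Proof.
  intros [[x1 Hx1] H1] [[x2 Hx2] H2].
  apply Rle_antisym; [rewrite <- Hx2 | rewrite <- Hx1]; auto.
Qed.

Lemma is_min_value_shifted_quadratic K P : 0 <= P ->
  is_min_value (fun t => / 2 * ((t - K) ^ 2 + t ^ 2 * P)) (K ^ 2 * P / (2 * (1 + P))).
Proof.
  intros HP. split.
  - exists (K / (1 + P)). field. lra.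
  - intros t.
    assert (Hsq : / 2 * ((t - K) ^ 2 + t ^ 2 * P) - K ^ 2 * P / (2 * (1 + P))
                  = (1 + P) / 2 * (t - K / (1 + P)) ^ 2) by (field; lra).
    pose proof (pow2_ge_0 (t - K / (1 + P))).
    assert (0 <= (1 + P) / 2 * (t - K / (1 + P)) ^ 2) by (apply Rmult_le_pos; lra).
    lra.
Qed.

Definition scaled_energy (nu alpha kb x y z : R) : R :=
  (1 + nu) * (x + y - 2 * kb) ^ 2 + (1 - nu) * ((x - y) ^ 2 + alpha * z ^ 2).

Lemma energy_isotropic D nu alpha kb x y z :
  energy D nu 1 alpha (mk3 kb kb 0) (x, y, z) = D / 4 * scaled_energy nu alpha kb x y z.
Proof. unfold energy, Dmul, vdot, vsub, mk3, v1, v2, v3, scaled_energy; simpl; field. Qed.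

Lemma detk_eq0 x y z : detk (x, y, z) = 0 <-> 4 * x * y = z ^ 2.
Proof. unfold detk, v1, v2, v3; simpl; split; intro; lra. Qed.

Lemma vnorm_vsub_lt x y z x' y' z' eps : 0 < eps ->
  (x' - x) ^ 2 + (y' - y) ^ 2 + (z' - z) ^ 2 < eps ^ 2 ->
  vnorm (vsub (x', y', z') (x, y, z)) < eps.
Proof.
  intros Heps Hd. unfold vnorm, vdot, vsub, mk3, v1, v2, v3; simpl.
  rewrite <- (sqrt_pow2 eps) by lra. apply sqrt_lt_1_alt. simpl in Hd.
  pose proof (Rle_0_sqr (x' - x)). pose proof (Rle_0_sqr (y' - y)).
  pose proof (Rle_0_sqr (z' - z)). unfold Rsqr in *. lra.
Qed.


Lemma scaled_energy_lower_bound nu alpha kb m x y z :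
  -1 < nu -> nu < 1 -> 0 <= m -> m <= 1 -> m <= alpha -> 4 * x * y = z ^ 2 ->
  4 * kb ^ 2 * (1 + nu) * ((1 - nu) * m) / ((1 + nu) + (1 - nu) * m)
    <= scaled_energy nu alpha kb x y z.
Proof.
  intros Hnu1 Hnu2 Hm0 Hm1 Hma Hcone. unfold scaled_energy.
  set (A := 1 + nu). set (B := (1 - nu) * m).
  assert (HA : 0 < A) by (unfold A; lra).
  assert (HB : 0 <= B) by (unfold B; nra).
  (* p^2 + alpha z^2 >= m (p^2 + z^2) = m (x + y)^2 on the cone *)
  assert (Hcmp : B * (x + y) ^ 2 <= (1 - nu) * ((x - y) ^ 2 + alpha * z ^ 2)).
  { unfold B. replace ((x + y) ^ 2) with ((x - y) ^ 2 + z ^ 2) by (rewrite <- Hcone; ring).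
    pose proof (pow2_ge_0 (x - y)). pose proof (pow2_ge_0 z).
    assert (m * ((x - y) ^ 2 + z ^ 2) <= (x - y) ^ 2 + alpha * z ^ 2) by nra. nra. }
  assert (Hsq : 4 * kb ^ 2 * A * B / (A + B) <= A * (x + y - 2 * kb) ^ 2 + B * (x + y) ^ 2).
  { apply Rmult_le_reg_l with (A + B); [lra|].
    replace ((A + B) * (4 * kb ^ 2 * A * B / (A + B))) with (4 * kb ^ 2 * A * B) by (field; lra).
    assert (Hid : (A + B) * (A * (x + y - 2 * kb) ^ 2 + B * (x + y) ^ 2) - 4 * kb ^ 2 * A * B
                  = ((A + B) * (x + y) - 2 * kb * A) ^ 2) by ring.
    pose proof (pow2_ge_0 ((A + B) * (x + y) - 2 * kb * A)). lra. }
  unfold A, B in *. lra.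
Qed.

Section ScaledLocalMinimizer.
Variables (nu alpha kb x y z eps : R).
Hypotheses (hnu1 : -1 < nu) (hnu2 : nu < 1) (hkb : 0 < kb)
  (Hcone : 4 * x * y = z ^ 2) (Heps : 0 < eps)
  (Hloc : forall x' y' z', 4 * x' * y' = z' ^ 2 ->
     (x' - x) ^ 2 + (y' - y) ^ 2 + (z' - z) ^ 2 < eps ^ 2 ->
     scaled_energy nu alpha kb x y z <= scaled_energy nu alpha kb x' y' z').

Lemma origin_not_scaled_local_min : ~ (x = 0 /\ y = 0 /\ z = 0).
Proof.
  intros [-> [-> ->]].
  set (t := Rmin (eps / 2) ((1 + nu) * kb)).
  assert (Ht0 : 0 < t) by (apply Rmin_glb_lt; nra).
  assert (Ht1 : t <= eps / 2) by apply Rmin_l.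
  assert (Ht2 : t <= (1 + nu) * kb) by apply Rmin_r.
  clearbody t.
  pose proof (Hloc t 0 0 ltac:(ring) ltac:(nra)) as H.
  unfold scaled_energy in H. nra.
Qed.

(* Along the ray through (x, y, z), which stays in the cone, the energy is a
   quadratic polynomial in the scaling parameter. *)
Lemma scaled_local_min_ray_stationary :
  (1 + nu) * (x + y - 2 * kb) * (x + y) + (1 - nu) * ((x - y) ^ 2 + alpha * z ^ 2) = 0.
Proof.
  remember (x ^ 2 + y ^ 2 + z ^ 2) as S eqn:HSdef.
  assert (HS : 0 <= S) by (rewrite HSdef; nra).
  enough (H : 2 * ((1 + nu) * (x + y - 2 * kb) * (x + y)
                   + (1 - nu) * ((x - y) ^ 2 + alpha * z ^ 2)) = 0) by lra.
  apply (quadratic_local_min_slope _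
           ((1 + nu) * (x + y) ^ 2 + (1 - nu) * ((x - y) ^ 2 + alpha * z ^ 2))
           (eps / (S + 1))).
  { apply Rdiv_lt_0_compat; lra. }
  intros h Hh.
  assert (Hh2 : h ^ 2 * S < eps ^ 2).
  { assert (Hh' : Rabs h * (S + 1) < eps) by (apply Rlt_div_r; lra).
    pose proof (Rabs_pos h) as Hu.
    assert (Hu1 : 0 <= Rabs h * (S + 1)) by (apply Rmult_le_pos; lra).
    assert (Hu2 : (Rabs h * (S + 1)) ^ 2 < eps ^ 2) by nra.
    assert (HSS : Rabs h ^ 2 * S <= Rabs h ^ 2 * (S + 1) ^ 2) by nra.
    rewrite <- (pow2_abs h). lra. }
  assert (Hray : 4 * ((1 + h) * x) * ((1 + h) * y) = ((1 + h) * z) ^ 2).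
  { transitivity ((1 + h) ^ 2 * (4 * x * y)); [ring | rewrite Hcone; ring]. }
  pose proof (Hloc _ _ _ Hray) as H.
  assert (Hdist : ((1 + h) * x - x) ^ 2 + ((1 + h) * y - y) ^ 2 + ((1 + h) * z - z) ^ 2
                  = h ^ 2 * S) by (rewrite HSdef; ring).
  rewrite Hdist in H. specialize (H Hh2).
  unfold scaled_energy in H. lra.
Qed.

(* Competitors with the same trace x + y, written with p' = x' - y'. *)
Lemma scaled_local_min_circle p' z' :
  p' ^ 2 + z' ^ 2 = (x - y) ^ 2 + z ^ 2 -> (p' - (x - y)) ^ 2 + (z' - z) ^ 2 < eps ^ 2 ->
  (x - y) ^ 2 + alpha * z ^ 2 <= p' ^ 2 + alpha * z' ^ 2.
Proof.
  intros Hcirc Hd.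
  pose proof (Hloc ((x + y + p') / 2) ((x + y - p') / 2) z') as H.
  unfold scaled_energy in H.
  replace ((x + y + p') / 2 + (x + y - p') / 2) with (x + y) in H by field.
  replace ((x + y + p') / 2 - (x + y - p') / 2) with p' in H by field.
  assert (Hdist : ((x + y + p') / 2 - x) ^ 2 + ((x + y - p') / 2 - y) ^ 2 + (z' - z) ^ 2
                  = (p' - (x - y)) ^ 2 / 2 + (z' - z) ^ 2) by field.
  rewrite Hdist in H.
  assert (H' : (1 - nu) * ((x - y) ^ 2 + alpha * z ^ 2) <= (1 - nu) * (p' ^ 2 + alpha * z' ^ 2)).
  { apply (Rplus_le_reg_l ((1 + nu) * (x + y - 2 * kb) ^ 2)), H; [nra |].
    pose proof (pow2_ge_0 (p' - (x - y))). lra. }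
  apply Rmult_le_reg_l with (1 - nu); lra.
Qed.

End ScaledLocalMinimizer.

Section IsotropicMinimizers.
Variables (D nu alpha kb : R).
Hypotheses (hD : 0 < D) (hnu1 : -1 < nu) (hnu2 : nu < 1) (halpha : 0 < alpha) (hkb : 0 < kb).
Let E := energy D nu 1 alpha (mk3 kb kb 0).

Lemma local_min_scaled x y z : local_min E (x, y, z) ->
  4 * x * y = z ^ 2 /\ exists eps, 0 < eps /\
  forall x' y' z', 4 * x' * y' = z' ^ 2 ->
    (x' - x) ^ 2 + (y' - y) ^ 2 + (z' - z) ^ 2 < eps ^ 2 ->
    scaled_energy nu alpha kb x y z <= scaled_energy nu alpha kb x' y' z'.
Proof.
  intros [Hdet [eps [Heps Hmin]]]. apply detk_eq0 in Hdet.
  split; [exact Hdet|]. exists eps. split; [exact Heps|].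
  intros x' y' z' Hcone Hd.
  specialize (Hmin (x', y', z') (proj2 (detk_eq0 _ _ _) Hcone)
                   (vnorm_vsub_lt _ _ _ _ _ _ _ Heps Hd)).
  unfold E in Hmin. rewrite !energy_isotropic in Hmin.
  apply Rmult_le_reg_l with (D / 4); lra.
Qed.

Lemma local_min_conditions x y z : local_min E (x, y, z) ->
  4 * x * y = z ^ 2 /\ ~ (x = 0 /\ y = 0 /\ z = 0) /\
  (1 + nu) * (x + y - 2 * kb) * (x + y) + (1 - nu) * ((x - y) ^ 2 + alpha * z ^ 2) = 0 /\
  (1 < alpha -> z = 0) /\ (alpha < 1 -> x = y).
Proof.
  intros Hl. destruct (local_min_scaled x y z Hl) as [Hcone [eps [Heps Hloc]]].
  assert (Hcirc := scaled_local_min_circle nu alpha kb x y z eps hnu2 Hcone Hloc).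
  split; [exact Hcone|].
  split; [exact (origin_not_scaled_local_min _ _ _ _ _ _ _ hnu1 hkb Hcone Heps Hloc)|].
  split; [exact (scaled_local_min_ray_stationary _ _ _ _ _ _ _ Hcone Heps Hloc)|].
  split.
  - intros Ha. apply (circle_weighted_local_min 1 alpha (x - y) z eps Ha Heps).
    intros p' z' H1 H2. pose proof (Hcirc p' z' H1 H2). lra.
  - intros Ha. enough (x - y = 0) by lra.
    apply (circle_weighted_local_min alpha 1 z (x - y) eps Ha Heps).
    intros z' p' H1 H2. pose proof (Hcirc p' z' ltac:(lra) ltac:(lra)). lra.
Qed.

Lemma global_min_of_scaled x y z : 4 * x * y = z ^ 2 ->
  (forall x' y' z', 4 * x' * y' = z' ^ 2 ->
     scaled_energy nu alpha kb x y z <= scaled_energy nu alpha kb x' y' z') ->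
  global_min E (x, y, z).
Proof.
  intros Hcone Hmin. split; [apply detk_eq0; exact Hcone|].
  intros [[x' y'] z'] Hdet. apply detk_eq0 in Hdet.
  unfold E. rewrite !energy_isotropic.
  apply Rmult_le_compat_l; [lra | exact (Hmin x' y' z' Hdet)].
Qed.

Lemma global_min_cone_trace x y z : 1 <= alpha -> 4 * x * y = z ^ 2 ->
  x + y = (1 + nu) * kb -> (alpha - 1) * z ^ 2 = 0 -> global_min E (x, y, z).
Proof.
  intros Ha Hcone Hsum Hz. apply global_min_of_scaled; [exact Hcone|].
  intros x' y' z' Hcone'.
  eapply Rle_trans;
    [| apply (scaled_energy_lower_bound nu alpha kb 1 x' y' z' hnu1 hnu2); lra].
  right. unfold scaled_energy.
  replace ((x - y) ^ 2 + alpha * z ^ 2) with ((x + y) ^ 2 + (alpha - 1) * z ^ 2)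
    by (rewrite <- Hcone; ring).
  rewrite Hsum, Hz. field. lra.
Qed.

Lemma global_min_diagonal z : alpha <= 1 ->
  let c := (1 + nu) * kb / (1 + nu + alpha - alpha * nu) in
  z ^ 2 = 4 * c ^ 2 -> global_min E (c, c, z).
Proof.
  intros Ha c Hz.
  assert (Hden : 0 < 1 + nu + alpha - alpha * nu) by nra.
  apply global_min_of_scaled; [rewrite Hz; ring|].
  intros x' y' z' Hcone'.
  eapply Rle_trans;
    [| apply (scaled_energy_lower_bound nu alpha kb alpha x' y' z' hnu1 hnu2); lra].
  right. unfold scaled_energy. rewrite Hz. unfold c. field. lra.
Qed.

Lemma local_min_alpha_gt1 k : 1 < alpha -> local_min E k ->
  k = mk3 ((1 + nu) * kb) 0 0 \/ k = mk3 0 ((1 + nu) * kb) 0.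
Proof.
  destruct k as [[x y] z]. intros Ha Hl.
  destruct (local_min_conditions x y z Hl) as [Hcone [Hnz [Hstat [Hz _]]]].
  specialize (Hz Ha). subst z. unfold mk3.
  assert (Hxy : x * y = 0) by lra.
  destruct (Rmult_integral _ _ Hxy) as [-> | ->].
  - assert (Hy : y * (y - (1 + nu) * kb) = 0) by lra.
    destruct (Rmult_integral _ _ Hy) as [-> | Hy']; [tauto|].
    right. repeat f_equal. lra.
  - assert (Hx : x * (x - (1 + nu) * kb) = 0) by lra.
    destruct (Rmult_integral _ _ Hx) as [-> | Hx']; [tauto|].
    left. repeat f_equal. lra.
Qed.

Lemma local_min_alpha_lt1 k : alpha < 1 -> local_min E k ->
  let c := (1 + nu) * kb / (1 + nu + alpha - alpha * nu) in
  k = mk3 c c (2 * c) \/ k = mk3 c c (- (2 * c)).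
Proof.
  destruct k as [[x y] z]. intros Ha Hl c.
  destruct (local_min_conditions x y z Hl) as [Hcone [Hnz [Hstat [_ Hxy]]]].
  specialize (Hxy Ha). subst y.
  assert (Hden : 0 < 1 + nu + alpha - alpha * nu) by nra.
  assert (Hx : x * ((1 + nu + alpha - alpha * nu) * x - (1 + nu) * kb) = 0).
  { rewrite <- Hcone in Hstat. lra. }
  destruct (Rmult_integral _ _ Hx) as [-> | Hx'].
  - exfalso. apply Hnz. repeat split. nra.
  - assert (Hxc : x = c) by (unfold c; field_simplify_eq; lra).
    subst x. assert (Hz : (z - 2 * c) * (z + 2 * c) = 0) by lra.
    unfold mk3. destruct (Rmult_integral _ _ Hz); [left | right]; repeat f_equal; lra.
Qed.

Lemma local_min_alpha_eq1 k : alpha = 1 -> local_min E k ->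
  exists phi, 0 <= phi < PI /\
    k = mk3 ((1 + nu) * kb * cos phi ^ 2) ((1 + nu) * kb * sin phi ^ 2)
            ((1 + nu) * kb * (2 * sin phi * cos phi)).
Proof.
  destruct k as [[x y] z]. intros Ha Hl.
  destruct (local_min_conditions x y z Hl) as [Hcone [Hnz [Hstat _]]].
  subst alpha.
  assert (Hsum : (x + y) * ((x + y) - (1 + nu) * kb) = 0).
  { replace ((x - y) ^ 2 + 1 * z ^ 2) with ((x + y) ^ 2) in Hstat by (rewrite <- Hcone; ring).
    lra. }
  destruct (Rmult_integral _ _ Hsum) as [Hs0 | Hs].
  - exfalso. apply Hnz. assert (Hy : y = - x) by lra. subst y.
    assert (Hx : x = 0) by nra. subst x. repeat split; nra.
  - apply cone_slice_angle; [nra | lra | exact Hcone].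
Qed.

Lemma minimizers_alpha_gt1 : 1 < alpha ->
  (forall k, global_min E k <-> (k = mk3 ((1 + nu) * kb) 0 0 \/ k = mk3 0 ((1 + nu) * kb) 0)) /\
  (forall k, local_min E k <-> global_min E k).
Proof.
  intros Ha. apply minimizers_iff.
  - intros k. apply local_min_alpha_gt1; assumption.
  - intros k [-> | ->]; apply global_min_cone_trace; (lra || ring).
Qed.

Lemma minimizers_alpha_lt1 : alpha < 1 ->
  (forall k, global_min E k <->
     (let c := (1 + nu) * kb / (1 + nu + alpha - alpha * nu) in
      k = mk3 c c (2 * c) \/ k = mk3 c c (- (2 * c)))) /\
  (forall k, local_min E k <-> global_min E k).
Proof.
  intros Ha. apply minimizers_iff.
  - intros k. apply local_min_alpha_lt1; assumption.
  - intros k [-> | ->]; apply global_min_diagonal; (lra || ring).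
Qed.

Lemma minimizers_alpha_eq1 : alpha = 1 ->
  (forall k, global_min E k <->
     (exists phi, 0 <= phi < PI /\
        k = mk3 ((1 + nu) * kb * cos phi ^ 2) ((1 + nu) * kb * sin phi ^ 2)
                ((1 + nu) * kb * (2 * sin phi * cos phi)))) /\
  (forall k, local_min E k <-> global_min E k).
Proof.
  intros Ha. apply minimizers_iff.
  - intros k. apply local_min_alpha_eq1; assumption.
  - intros k [phi [_ ->]]. pose proof (sin2_cos2 phi) as Hpyth. unfold Rsqr in Hpyth.
    apply global_min_cone_trace; [lra | ring | | rewrite Ha; ring].
    transitivity ((1 + nu) * kb * (sin phi * sin phi + cos phi * cos phi)); [ring|].
    rewrite Hpyth. ring.
Qed.

End IsotropicMinimizers.

Lemma Ufun_isotropic nu alpha kb km th :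
  Ufun nu 1 alpha (mk3 kb kb 0) km th =
  / 2 * ((km - sqrt (1 + nu) * kb) ^ 2
         + km ^ 2 * ((acoef nu 1 * cos th) ^ 2 + (bcoef nu 1 alpha * sin th) ^ 2)).
Proof.
  unfold Ufun, vdot, vsub, kappa_of, Tmap, mk3, v1, v2, v3; simpl. rewrite sqrt_1.
  unfold Rdiv. rewrite Rinv_1, !Rmult_1_r. field.
Qed.

Definition reduced_energy (K a b th : R) : R :=
  K ^ 2 * ((a * cos th) ^ 2 + (b * sin th) ^ 2) / (2 * (1 + ((a * cos th) ^ 2 + (b * sin th) ^ 2))).

Lemma is_min_value_Ufun nu alpha kb th :
  is_min_value (fun km => Ufun nu 1 alpha (mk3 kb kb 0) km th)
    (reduced_energy (sqrt (1 + nu) * kb) (acoef nu 1) (bcoef nu 1 alpha) th).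
Proof.
  assert (HP : 0 <= (acoef nu 1 * cos th) ^ 2 + (bcoef nu 1 alpha * sin th) ^ 2).
  { pose proof (pow2_ge_0 (acoef nu 1 * cos th)).
    pose proof (pow2_ge_0 (bcoef nu 1 alpha * sin th)). lra. }
  destruct (is_min_value_shifted_quadratic (sqrt (1 + nu) * kb) _ HP) as [[t Ht] Hmin].
  split.
  - exists t. rewrite Ufun_isotropic. exact Ht.
  - intros km. rewrite Ufun_isotropic. apply Hmin.
Qed.

Lemma is_derive_reduced_energy K a b th :
  is_derive (reduced_energy K a b) th
    (K ^ 2 * (b ^ 2 - a ^ 2) * sin (2 * th)
     / (2 * (a ^ 2 * cos th ^ 2 + b ^ 2 * sin th ^ 2 + 1) ^ 2)).
Proof.
  unfold reduced_energy.
  assert (HP : 0 < 1 + ((a * cos th) ^ 2 + (b * sin th) ^ 2))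
    by (pose proof (pow2_ge_0 (a * cos th)); pose proof (pow2_ge_0 (b * sin th)); lra).
  auto_derive; [lra|].
  rewrite sin_2a. field. lra.
Qed.

Theorem mainTheorem4 (D nu alpha kb : R)
  (hD : 0 < D) (hnu1 : -1 < nu) (hnu2 : nu < 1) (halpha : 0 < alpha) (hkb : 0 < kb) :
  let beta := 1 in
  let kbar := mk3 kb kb 0 in
  let E := energy D nu beta alpha kbar in
  (forall k, local_min E k <-> global_min E k) /\
  (1 < alpha -> forall k, global_min E k <->
      (k = mk3 ((1 + nu) * kb) 0 0 \/ k = mk3 0 ((1 + nu) * kb) 0)) /\
  (alpha < 1 -> forall k, global_min E k <->
      (let c := (1 + nu) * kb / (1 + nu + alpha - alpha * nu) in
       k = mk3 c c (2 * c) \/ k = mk3 c c (- (2 * c)))) /\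
  (alpha = 1 -> forall k, global_min E k <->
      (exists phi, 0 <= phi < PI /\
         k = mk3 ((1 + nu) * kb * (cos phi) ^ 2) ((1 + nu) * kb * (sin phi) ^ 2)
                 ((1 + nu) * kb * (2 * sin phi * cos phi)))) /\
  (exists Ut : R -> R, forall theta,
      is_min_value (fun km => Ufun nu beta alpha kbar km theta) (Ut theta)) /\
  (forall Ut : R -> R,
      (forall theta, is_min_value (fun km => Ufun nu beta alpha kbar km theta) (Ut theta)) ->
      let a := acoef nu beta in
      let b := bcoef nu beta alpha in
      let kmbar := sqrt (1 + nu) * kb in
      forall theta, derivable_pt_lim Ut theta
        (kmbar ^ 2 * (b ^ 2 - a ^ 2) * sin (2 * theta)
         / (2 * (a ^ 2 * (cos theta) ^ 2 + b ^ 2 * (sin theta) ^ 2 + 1) ^ 2))).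
Proof.
  cbv zeta.
  pose proof (minimizers_alpha_gt1 D nu alpha kb hD hnu1 hnu2 hkb) as Hgt.
  pose proof (minimizers_alpha_lt1 D nu alpha kb hD hnu1 hnu2 halpha hkb) as Hlt.
  pose proof (minimizers_alpha_eq1 D nu alpha kb hD hnu1 hnu2 halpha hkb) as Heq.
  set (Ured := reduced_energy (sqrt (1 + nu) * kb) (acoef nu 1) (bcoef nu 1 alpha)).
  split; [|split; [|split; [|split; [|split]]]].
  - destruct (Rtotal_order alpha 1) as [Ha | [Ha | Ha]];
      [apply (Hlt Ha) | apply (Heq Ha) | apply (Hgt Ha)].
  - intros Ha. apply (Hgt Ha).
  - intros Ha. apply (Hlt Ha).
  - intros Ha. apply (Heq Ha).
  - exists Ured. intros th. apply is_min_value_Ufun.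
  - intros Ut HUt th. apply is_derive_Reals, (is_derive_ext Ured).
    + intros t. exact (is_min_value_unique _ _ _ (is_min_value_Ufun nu alpha kb t) (HUt t)).
    + apply is_derive_reduced_energy.
Qed.
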